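(* Let $\mathcal{G}=(\mathcal{V},\mathcal{E},\mathcal{W})$ be an undirected weighted graph (weights are nonzero reals, possibly negative) with $c$ connected components, and let $\mathcal{F}$ be a spanning forest of $\mathcal{G}$ with cycle subgraph $\mathcal{C}$. Then the weighted Laplacian $L(\mathcal{G})=EWE^T$ is similar to the block-diagonal matrix $$\begin{bmatrix} L_e(\mathcal{F})\, R_{(\mathcal{F},\mathcal{C})}\, W\, R_{(\mathcal{F},\mathcal{C})}^T & 0 \\ 0 & 0_{c\times c}\end{bmatrix},$$ where $R_{(\mathcal{F},\mathcal{C})}=\begin{bmatrix} I & L_e(\mathcal{F})^{-1}E_{\mathcal{F}}^TE_{\mathcal{C}}\end{bmatrix}$.
   Context: A weighted graph $\mathcal{G}=(\mathcal{V},\mathcal{E},\mathcal{W})$ has node set $\mathcal{V}$, edge set $\mathcal{E}$ and weight function $\mathcal{W}:\mathcal{E}\to\mathbb{R}\setminus\{0\}$; $W$ is the $|\mathcal{E}|\times|\mathcal{E}|$ diagonal matrix with $W_{kk}=w_k=\mathcal{W}(k)$. Each edge is given an arbitrary orientation, and the incidence matrix $E\in\mathbb{R}^{|\mathcal{V}|\times|\mathcal{E}|}$ has, in the column of edge $k=(i,j)$, entry $+1$ in row $i$, $-1$ in row $j$, and $0$ elsewhere. The weighted Laplacian is $L(\mathcal{G})=EWE^T$. A spanning forest $\mathcal{F}=(\mathcal{V},\mathcal{E}_{\mathcal{F}})$ is an acyclic subgraph with $|\mathcal{V}|-c$ edges containing a spanning tree of each connected component; the cycle subgraph is $\mathcal{C}=(\mathcal{V},\mathcal{E}\setminus\mathcal{E}_{\mathcal{F}})$.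 Edges are labeled so that $E=[E_{\mathcal{F}}\ E_{\mathcal{C}}]$ with $E_{\mathcal{F}}, E_{\mathcal{C}}$ the incidence matrices of $\mathcal{F}$ and $\mathcal{C}$, and $W$ is ordered accordingly. $L_e(\mathcal{F})=E_{\mathcal{F}}^TE_{\mathcal{F}}$ (the edge Laplacian of the forest), which is invertible since $E_{\mathcal{F}}$ has full column rank. *)

From HB Require Import structures.
From mathcomp Require Import all_boot all_order all_algebra.
Set Implicit Arguments. Unset Strict Implicit. Unset Printing Implicit Defensive.
Import Order.TTheory GRing.Theory Num.Theory.
Local Open Scope ring_scope.

(* A (multi)graph on node set 'I_n with edge set 'I_m: edge k joins
   nodes [eu k] and [ev k]; it is oriented from [eu k] to [ev k]. *)

Definition sub_adj (n m : nat) (eu ev : 'I_m -> 'I_n) (P : pred 'I_m) : rel 'I_n :=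
  fun i j => [exists k, P k && (((eu k == i) && (ev k == j)) ||
                                ((eu k == j) && (ev k == i)))].

Definition ncomp_graph (n m : nat) (eu ev : 'I_m -> 'I_n) : nat :=
  n_comp (sub_adj eu ev predT) predT.

Definition incidence (R : pzRingType) (n m : nat) (eu ev : 'I_m -> 'I_n)
  : 'M[R]_(n, m) :=
  \matrix_(i < n, k < m) (if i == eu k then 1 else if i == ev k then -1 else 0).

Definition weight_mx (R : pzRingType) (m : nat) (w : 'I_m -> R) : 'M[R]_m :=
  diag_mx (\row_k w k).

Definition laplacian (R : pzRingType) (n m : nat) (eu ev : 'I_m -> 'I_n)
  (w : 'I_m -> R) : 'M[R]_n :=
  incidence R eu ev *m weight_mx w *m (incidence R eu ev)^T.

(* The edges 'I_p (embedded as the first p edges of 'I_(p+q)) form a spanning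
   forest of the graph: acyclic (every forest edge is a bridge of the forest,
   i.e. its endpoints are not connected by the other forest edges), spanning
   every component (the endpoints of every graph edge are connected in the
   forest), and with |V| - c edges. *)
Definition is_forest_edge (p q : nat) (k : 'I_(p + q)) : bool := (k < p)%N.

Definition spanning_forest (n p q : nat) (eu ev : 'I_(p + q) -> 'I_n) : Prop :=
  [/\ forall k : 'I_p,
        ~~ connect (sub_adj eu ev (fun k' => (k' < p)%N && (k' != lshift q k)))
                   (eu (lshift q k)) (ev (lshift q k)),
      forall k : 'I_(p + q),
        connect (sub_adj eu ev (@is_forest_edge p q)) (eu k) (ev k)
    & p = (n - ncomp_graph eu ev)%N].

Definition similar_mx (R : comUnitRingType) (n k : nat) (A : 'M[R]_n) (B : 'M[R]_k)
  : Prop :=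
  exists e : k = n, exists P : 'M[R]_n,
    P \in unitmx /\ A = P *m castmx (e, e) B *m invmx P.

From HB Require Import structures.
From mathcomp Require Import all_boot all_order all_algebra.
Set Implicit Arguments. Unset Strict Implicit. Unset Printing Implicit Defensive.
Import Order.TTheory GRing.Theory Num.Theory.
Local Open Scope ring_scope.

(* The forest columns E_F of the incidence matrix are linearly independent:
   deleting a forest edge splits its tree, and the indicator of one side is a
   node potential whose differences vanish on every other forest edge.
   Every cycle column lies in their span: a potential whose differences vanish
   on the forest is constant on each component, hence has zero differences on
   every edge.  So E = E_F R with R = [I, L_e(F)^-1 E_F^T E_C], and
   L = E_F (R W R^T) E_F^T.  Finally, for any F of full column rank p in
   dimension p + c, F M F^T is similar to diag(F^T F M, 0) through the basis
   P = [F (F^T F)^-1, K^T], where the rows of K span the left kernel of F. *)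

Lemma rowv_mul_trmx_eq0 (R : realFieldType) m (y : 'rV[R]_m) :
  y *m y^T = 0 -> y = 0.
Proof.
move=> /(congr1 (fun M : 'M[R]_1 => M 0 0)); rewrite !mxE => sum_sq0.
apply/rowP => i; rewrite [RHS]mxE.
have /eqP : y 0 i * y^T i 0 = 0.
  apply: (psumr_eq0P (F := fun j => y 0 j * y^T j 0) _ sum_sq0) => //.
  by move=> j _; rewrite mxE sqr_ge0.
by rewrite mxE mulf_eq0 orbb => /eqP.
Qed.

Lemma row_free_gram_unitmx (R : realFieldType) m k (A : 'M[R]_(m, k)) :
  row_free A -> A *m A^T \in unitmx.
Proof.
move=> freeA; rewrite -row_free_unit; apply: inj_row_free => x xAAt0.
apply: (row_free_inj freeA); rewrite mul0mx; apply: rowv_mul_trmx_eq0.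
by rewrite trmx_mul mulmxA -(mulmxA x) xAAt0 mul0mx.
Qed.

Lemma row_mx_factor (R : fieldType) m p q (F : 'M[R]_(m, p)) (C : 'M[R]_(m, q)) :
  F^T *m F \in unitmx -> (C^T <= F^T)%MS ->
  row_mx F C = F *m row_mx 1%:M (invmx (F^T *m F) *m F^T *m C).
Proof.
move=> unitL /submxP[D defCt].
have defC : C = F *m D^T by rewrite -[C]trmxK defCt trmx_mul trmxK.
rewrite mul_mx_row mulmx1 {2}defC !mulmxA -(mulmxA _ F^T F) mulmxKV //.
by rewrite -defC.
Qed.

Lemma left_kernel_basis (R : fieldType) p c (F : 'M[R]_(p + c, p)) :
  \rank F = p -> exists2 K : 'M[R]_(c, p + c), K *m F = 0 & row_free K.
Proof.
move=> rankF.
have rank_ker : \rank (kermx F) = c by rewrite mxrank_ker rankF addKn.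
have : (row_base (kermx F) <= kermx F)%MS by rewrite eq_row_base.
move: (row_base (kermx F)) (row_base_free (kermx F)); rewrite rank_ker.
by move=> K freeK /sub_kermxP KF0; exists K.
Qed.

Lemma similar_mx_sandwich (R : realFieldType) p c (F : 'M[R]_(p + c, p))
    (M : 'M[R]_p) :
  row_free F^T ->
  similar_mx (F *m M *m F^T) (block_mx (F^T *m F *m M) 0 0 0 : 'M_(p + c)).
Proof.
move=> freeFt; set L := F^T *m F.
have unitL : L \in unitmx by rewrite /L -{2}[F]trmxK row_free_gram_unitmx.
have rankF : \rank F = p by rewrite -mxrank_tr; apply/eqP.
have [K KF0 freeK] := left_kernel_basis rankF.
have FtKt0 : F^T *m K^T = 0 by rewrite -trmx_mul KF0 trmx0.
pose P := row_mx (F *m invmx L) K^T.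
have : col_mx F^T (invmx (K *m K^T) *m K) *m P = 1%:M.
  rewrite mul_col_row scalar_mx_block mulmxA mulmxV // FtKt0.
  rewrite -!mulmxA (mulmxA K) KF0 mul0mx mulmx0 mulVmx //.
  exact: row_free_gram_unitmx.
case/mulmx1_unit=> _ unitP; exists erefl, P; split=> //.
rewrite castmx_id; apply: (canRL (mulmxK unitP)).
have FtP : F^T *m P = row_mx 1%:M 0 by rewrite mul_mx_row mulmxA mulmxV // FtKt0.
rewrite -[_ *m F^T *m P]mulmxA FtP mul_mx_row mulmx1 mulmx0 mul_row_block.
by rewrite !mulmx0 !addr0 -mulmxA mulKmx.
Qed.

Section IncidenceOfForest.

Variables (R : fieldType) (n p q : nat) (eu ev : 'I_(p + q) -> 'I_n).
Hypothesis loopless : forall k, eu k != ev k.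

Local Notation E := (incidence R eu ev).

Lemma trmx_incidence_mulE l (u : 'M[R]_(n, l)) k j :
  (E^T *m u) k j = u (eu k) j - u (ev k) j.
Proof.
rewrite !mxE (bigD1 (eu k)) //= (bigD1 (ev k)) /=; last by rewrite eq_sym.
rewrite big1 ?addr0; last first.
  by move=> i /andP[iNu iNv]; rewrite !mxE (negbTE iNv) (negbTE iNu) mul0r.
by rewrite !mxE eqxx eq_sym (negbTE (loopless k)) eqxx mul1r mulN1r.
Qed.

Lemma sub_adj_connect_sym (P : pred 'I_(p + q)) :
  connect_sym (sub_adj eu ev P).
Proof.
apply: sym_connect_sym => a b.
by apply/existsP/existsP => -[k /andP[Pk ab]]; exists k; rewrite Pk orbC.
Qed.

Lemma forest_incidence_row_free :
  (forall k : 'I_p,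
     ~~ connect (sub_adj eu ev (fun k' => (k' < p)%N && (k' != lshift q k)))
                (eu (lshift q k)) (ev (lshift q k))) ->
  row_free (lsubmx E)^T.
Proof.
move=> bridge; apply: inj_row_free => x xEF0; apply/rowP => k; rewrite mxE.
pose cut := sub_adj eu ev (fun k' => (k' < p)%N && (k' != lshift q k)).
pose side : 'cV[R]_n := \col_i (connect cut (eu (lshift q k)) i)%:R.
have EFside : (lsubmx E)^T *m side = delta_mx k 0.
  apply/colP => j; rewrite trmx_lsub mul_usub_mx [LHS]mxE trmx_incidence_mulE.
  rewrite !mxE; case: (eqVneq j k) => [->|jNk].
    by rewrite connect0 (negbTE (bridge k)) subr0.
  have cut_j : cut (eu (lshift q j)) (ev (lshift q j)).
    apply/existsP; exists (lshift q j); rewrite !eqxx /= andbT ltn_ord /=.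
    by apply: contra jNk => /eqP/lshift_inj ->.
  have := connect_closed (sub_adj_connect_sym _) (eu (lshift q k)) cut_j.
  by rewrite !inE => ->; rewrite subrr.
have := congr1 (fun N : 'M[R]_1 => N 0 0) (congr1 (mulmx^~ side) xEF0).
by rewrite -mulmxA EFside -colE mul0mx !mxE.
Qed.

Lemma cycle_incidence_sub :
  (forall k : 'I_(p + q),
     connect (sub_adj eu ev (@is_forest_edge p q)) (eu k) (ev k)) ->
  ((rsubmx E)^T <= (lsubmx E)^T)%MS.
Proof.
move=> spanning; rewrite submxE; apply/eqP.
move: (cokermx _) (mulmx_coker (lsubmx E)^T) => u EFu0; apply/matrixP => k j.
have flat_forest a b : sub_adj eu ev (@is_forest_edge p q) a b -> u a j = u b j.
  case/existsP=> e /andP[forest_e ab].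
  have := congr1 (fun N : 'M[R]_(p, n) => N (Ordinal forest_e) j) EFu0.
  rewrite trmx_lsub mul_usub_mx [LHS]mxE trmx_incidence_mulE [RHS]mxE.
  have -> : lshift q (Ordinal forest_e) = e by apply: val_inj.
  by move/eqP; rewrite subr_eq0; case/orP: ab => /andP[/eqP-> /eqP->] /eqP.
have closed_level : closed (sub_adj eu ev (@is_forest_edge p q))
                           [pred i | u i j == u (eu (rshift p k)) j].
  by move=> a b /flat_forest; rewrite !inE => ->.
rewrite trmx_rsub mul_dsub_mx [LHS]mxE trmx_incidence_mulE [RHS]mxE.
have := closed_connect closed_level (spanning (rshift p k)).
by rewrite !inE eqxx => /esym/eqP ->; rewrite subrr.
Qed.

End IncidenceOfForest.

Theorem proposition1 (R : realFieldType) (n p q c : nat)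
  (eu ev : 'I_(p + q) -> 'I_n) (w : 'I_(p + q) -> R)
  (Hloop : forall k, eu k != ev k)
  (Hw : forall k, w k != 0)
  (Hc : c = ncomp_graph eu ev)
  (HF : spanning_forest eu ev) :
  let E := incidence R eu ev in
  let EF := lsubmx E in
  let EC := rsubmx E in
  let W := weight_mx w in
  let LeF := EF^T *m EF in
  let RFC := row_mx (1%:M : 'M[R]_p) (invmx LeF *m EF^T *m EC) in
  similar_mx (laplacian eu ev w)
    (block_mx (LeF *m RFC *m W *m RFC^T) (0 : 'M[R]_(p, c))
              (0 : 'M[R]_(c, p)) (0 : 'M[R]_(c, c))).
Proof.
case: HF => /(forest_incidence_row_free R Hloop) freeEFt.
move=> /(cycle_incidence_sub R Hloop) subEC Hp.
have c_le_n : (c <= n)%N.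
  by rewrite Hc /ncomp_graph (leq_trans (max_card _)) ?card_ord.
have n_eq : (p + c = n)%N by rewrite Hp -Hc subnK.
subst n => E EF EC W LeF RFC.
have unitLeF : LeF \in unitmx by rewrite /LeF -{2}[EF]trmxK row_free_gram_unitmx.
have defE : E = EF *m RFC by rewrite -[E]hsubmxK row_mx_factor.
have -> : laplacian eu ev w = EF *m (RFC *m W *m RFC^T) *m EF^T.
  by rewrite /laplacian -/E -/W defE trmx_mul !mulmxA.
have -> : LeF *m RFC *m W *m RFC^T = LeF *m (RFC *m W *m RFC^T).
  by rewrite !mulmxA.
exact: similar_mx_sandwich.
Qed.
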